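(* Let $E$ be a finite-dimensional real inner product space and $C(t)=\bigcap_{i=1}^k\{x\in E:(x,n_i)_0\le c_i(t)\}$ with $n_i\in E$ and globally Lipschitz continuous functions $c_i$, $C(t)$ nonempty. Assume that for each $t\in[0,T]$ and $x\in C(t)$ the vectors $\{n_i:i\in J(t,x)\}$ are linearly independent, where $J(t,x)=\{i:(x,n_i)_0=c_i(t)\}$. Then for a solution $x$ of $-\dot x\in N^0_{C(t)}(x)$ on $[0,T]$ there exist integrable functions $\lambda_i:[0,T]\to[0,\infty)$, $i=1,\dots,k$, such that $-\dot x(t)=\sum_{i=1}^k\lambda_i(t)n_i$ for a.a. $t\in[0,T]$.
   Context: $N^0_K(x)=\{\zeta:(\zeta,c-x)_0\le0\ \forall c\in K\}$ if $x\in K$, $\emptyset$ otherwise. A solution is a Lipschitz function with $x(t)\in C(t)$ satisfying the inclusion a.e. *)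

From HB Require Import structures.
From mathcomp Require Import all_boot all_order all_algebra.
From mathcomp Require Import all_classical all_reals all_analysis.
Set Implicit Arguments. Unset Strict Implicit. Unset Printing Implicit Defensive.
Import Order.TTheory GRing.Theory Num.Theory.
Import numFieldNormedType.Exports.
Local Open Scope classical_set_scope.
Local Open Scope ring_scope.

(* The finite-dimensional real inner product space E is modelled as
   'rV[R]_n equipped with the inner product (x,y)_0 := x M y^T for a
   symmetric positive definite matrix M (every finite-dimensional real
   inner product space is of this form). *)
Definition ip (R : realType) (n : nat) (M : 'M[R]_n) (x y : 'rV[R]_n) : R :=
  (x *m M *m y^T) 0 0.

Definition is_inner_product_matrix (R : realType) (n : nat) (M : 'M[R]_n) : Prop :=
  M^T = M /\ (forall x : 'rV[R]_n, x != 0 -> 0 < ip M x x).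

Definition normal_cone (R : realType) (n : nat) (M : 'M[R]_n)
  (K : set 'rV[R]_n) (x : 'rV[R]_n) : set 'rV[R]_n :=
  [set z | K x /\ forall c, K c -> ip M z (c - x) <= 0].

Definition polyhedron (R : realType) (n k : nat) (M : 'M[R]_n)
  (nv : 'I_k -> 'rV[R]_n) (c : 'I_k -> R -> R) (t : R) : set 'rV[R]_n :=
  [set x | forall i : 'I_k, ip M x (nv i) <= c i t].

Definition active (R : realType) (n k : nat) (M : 'M[R]_n)
  (nv : 'I_k -> 'rV[R]_n) (c : 'I_k -> R -> R) (t : R) (x : 'rV[R]_n) : {set 'I_k} :=
  [set i | ip M x (nv i) == c i t].

Definition lin_indep_on (R : realType) (n k : nat) (nv : 'I_k -> 'rV[R]_n)
  (J : {set 'I_k}) : Prop :=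
  forall a : 'I_k -> R, \sum_(i in J) a i *: nv i = 0 -> forall i, i \in J -> a i = 0.

Definition globally_lipschitz (R : realType) (f : R -> R) : Prop :=
  exists L : R, forall s t : R, `|f s - f t| <= L * `|s - t|.

Definition is_solution (R : realType) (n : nat) (M : 'M[R]_n)
  (C : R -> set 'rV[R]_n) (T : R) (x : R -> 'rV[R]_n) : Prop :=
  (exists L : R, forall s t, s \in `[0, T] -> t \in `[0, T] ->
      `|x s - x t| <= L * `|s - t|) /\
  (forall t, t \in `[0, T] -> C t (x t)) /\
  {ae (@lebesgue_measure R), forall t, t \in `[0, T] ->
      derivable x t 1 /\ normal_cone M (C t) (x t) (- derive1 x t)}.

From HB Require Import structures.
From mathcomp Require Import all_boot all_order all_algebra.
From mathcomp Require Import all_classical all_reals all_analysis.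
From mathcomp Require Import measurable_realfun lra.
Import Order.TTheory GRing.Theory Num.Theory.
Import numFieldNormedType.Exports.
Local Open Scope classical_set_scope.
Local Open Scope ring_scope.

(* Where x is differentiable, v = -x'(t) lies in the normal cone of C(t) at x(t). Any
   direction d with (d, n_i) <= 0 for all active i is feasible, so (v, d) <= 0. Applied
   to +-(v - w), where w is the projection of v onto the span of the active normals,
   this gives v = w; applied to the dual basis of the active normals it shows that the
   coefficients of w are nonnegative. By linear independence these coefficients are
   v N_J G_J^-1, with G_J the Gram matrix of the active normals, i.e. a fixed linear
   function of v on each set {t | J(t, x(t)) = J}, and these sets are measurable.
   Replacing x' by the clipped limsup of the backward difference quotients of a
   Lipschitz extension of x makes the multipliers bounded measurable functions, hence
   integrable on [0, T]. *)

Section InnerProduct.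
Context {R : realType} {n : nat} {M : 'M[R]_n}.
Implicit Types x y z : 'rV[R]_n.

Lemma ipE x y : ip M x y = \sum_a x 0 a * (M *m y^T) a 0.
Proof. by rewrite /ip -mulmxA mxE. Qed.

Lemma ipDl x y z : ip M (x + y) z = ip M x z + ip M y z.
Proof. by rewrite /ip !mulmxDl mxE. Qed.

Lemma ipZl a x z : ip M (a *: x) z = a * ip M x z.
Proof. by rewrite /ip -!scalemxAl mxE. Qed.

Lemma ipNl x z : ip M (- x) z = - ip M x z.
Proof. by rewrite -scaleN1r ipZl mulN1r. Qed.

Lemma ipBl x y z : ip M (x - y) z = ip M x z - ip M y z.
Proof. by rewrite ipDl ipNl. Qed.

Lemma ipDr x y z : ip M z (x + y) = ip M z x + ip M z y.
Proof. by rewrite /ip linearD /= mulmxDr mxE. Qed.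

Lemma ipZr a x z : ip M z (a *: x) = a * ip M z x.
Proof. by rewrite /ip linearZ /= -scalemxAr mxE. Qed.

Lemma ipNr x z : ip M z (- x) = - ip M z x.
Proof. by rewrite -scaleN1r ipZr mulN1r. Qed.

Lemma ip_suml I (r : seq I) (P : pred I) (F : I -> 'rV[R]_n) z :
  ip M (\sum_(i <- r | P i) F i) z = \sum_(i <- r | P i) ip M (F i) z.
Proof.
by apply: (big_morph (ip M ^~ z)) => [x y|]; rewrite ?ipDl // /ip !mul0mx mxE.
Qed.

Lemma ip_sumr I (r : seq I) (P : pred I) (F : I -> 'rV[R]_n) z :
  ip M z (\sum_(i <- r | P i) F i) = \sum_(i <- r | P i) ip M z (F i).
Proof.
apply: (big_morph (ip M z)) => [x y|]; first exact: ipDr.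
by rewrite /ip trmx0 mulmx0 mxE.
Qed.

Lemma ipC : M^T = M -> forall x y, ip M x y = ip M y x.
Proof.
move=> MT x y; have trE (A : 'M[R]_1) : A 0 0 = A^T 0 0 by rewrite mxE.
by rewrite /ip trE !trmx_mul MT trmxK mulmxA.
Qed.

Lemma ip_eq0 : is_inner_product_matrix M -> forall x, ip M x x = 0 -> x = 0.
Proof. by move=> [_ pos] x xx0; apply/eqP; apply: contra_eqT xx0 => /pos/gt_eqF->. Qed.

End InnerProduct.

Section GramMatrix.
Context {R : realType} {n k : nat} (M : 'M[R]_n) (nv : 'I_k -> 'rV[R]_n).
Variable J : {set 'I_k}.

(* Padded with the identity outside [J], so that it is invertible as soon as the
   normals in [J] are linearly independent. *)
Definition gram_mx : 'M[R]_k := \matrix_(i, j)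
  if (i \in J) && (j \in J) then ip M (nv i) (nv j) else (i == j)%:R.

Lemma mul_gram_mx_in (a : 'rV[R]_k) j : j \in J ->
  (a *m gram_mx) 0 j = ip M (\sum_(i in J) a 0 i *: nv i) (nv j).
Proof.
move=> jJ; rewrite mxE ip_suml (bigID (mem J)) /= [X in _ + X]big1 ?addr0.
  by apply: eq_bigr => i iJ; rewrite mxE iJ jJ ipZl.
move=> i iNJ; rewrite mxE (negbTE iNJ) /=.
by case: eqP iNJ => [->|]; rewrite ?jJ ?mulr0.
Qed.

Lemma mul_gram_mx_out (a : 'rV[R]_k) j : j \notin J -> (a *m gram_mx) 0 j = a 0 j.
Proof.
move=> jNJ; rewrite mxE (bigD1 j) //= mxE (negbTE jNJ) andbF eqxx mulr1.
by rewrite big1 ?addr0 // => i ij; rewrite mxE (negbTE jNJ) andbF (negbTE ij) mulr0.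
Qed.

Hypotheses (M_ip : is_inner_product_matrix M) (nv_indep : lin_indep_on nv J).

Lemma gram_mx_unit : gram_mx \in unitmx.
Proof.
rewrite -row_free_unit; apply: inj_row_free => a aG0.
set w := \sum_(i in J) a 0 i *: nv i.
have w_orth j : j \in J -> ip M w (nv j) = 0.
  by move=> jJ; rewrite -mul_gram_mx_in // aG0 mxE.
have w0 : w = 0.
  apply: (ip_eq0 M_ip); rewrite {2}/w ip_sumr big1 // => i iJ.
  by rewrite ipZr w_orth // mulr0.
apply/rowP => j; rewrite mxE; have [jJ|jNJ] := boolP (j \in J).
  exact: nv_indep w0 j jJ.
by rewrite -(mul_gram_mx_out a j jNJ) aG0 mxE.
Qed.

Lemma gram_solve_in (b : 'rV[R]_k) j : j \in J ->
  ip M (\sum_(i in J) (b *m invmx gram_mx) 0 i *: nv i) (nv j) = b 0 j.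
Proof. by move=> jJ; rewrite -mul_gram_mx_in // (mulmxKV gram_mx_unit). Qed.

Lemma gram_solve_out (b : 'rV[R]_k) j : j \notin J ->
  (b *m invmx gram_mx) 0 j = b 0 j.
Proof. by move=> jNJ; rewrite -[in RHS](mulmxKV gram_mx_unit b) mul_gram_mx_out. Qed.

End GramMatrix.

Section Multipliers.
Context {R : realType} {n k : nat} (M : 'M[R]_n) (nv : 'I_k -> 'rV[R]_n).

Definition normals_mx (J : {set 'I_k}) : 'M[R]_(n, k) :=
  \matrix_(a, j) if j \in J then (M *m (nv j)^T) a 0 else 0.

Lemma mul_normals_mx (J : {set 'I_k}) (v : 'rV[R]_n) j :
  (v *m normals_mx J) 0 j = if j \in J then ip M v (nv j) else 0.
Proof.
rewrite mxE; under eq_bigr do rewrite mxE.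
by case: ifP => _; rewrite ?ipE // big1 // => a _; rewrite mulr0.
Qed.

(* [v *m multipliers_mx J] are the coefficients of the orthogonal projection of [v]
   onto the span of the normals in [J]; they vanish outside [J]. *)
Definition multipliers_mx (J : {set 'I_k}) : 'M[R]_(n, k) :=
  normals_mx J *m invmx (gram_mx M nv J).

Section ActiveSet.
Variable J : {set 'I_k}.
Hypotheses (M_ip : is_inner_product_matrix M) (nv_indep : lin_indep_on nv J).

Lemma multipliers_out (v : 'rV[R]_n) j : j \notin J -> (v *m multipliers_mx J) 0 j = 0.
Proof.
by move=> jNJ; rewrite mulmxA gram_solve_out // mul_normals_mx (negbTE jNJ).
Qed.

Lemma sum_multipliers (v : 'rV[R]_n) :
  \sum_i (v *m multipliers_mx J) 0 i *: nv i =
  \sum_(i in J) (v *m multipliers_mx J) 0 i *: nv i.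
Proof.
rewrite (bigID (mem J)) /= [X in _ + X]big1 ?addr0 // => i iNJ.
by rewrite multipliers_out ?scale0r.
Qed.

Lemma ip_sum_multipliers (v : 'rV[R]_n) j : j \in J ->
  ip M (\sum_i (v *m multipliers_mx J) 0 i *: nv i) (nv j) = ip M v (nv j).
Proof.
by move=> jJ; rewrite sum_multipliers mulmxA gram_solve_in // mul_normals_mx jJ.
Qed.

End ActiveSet.
End Multipliers.

Section PolyhedronNormalCone.
Context {R : realType} {n k : nat} (M : 'M[R]_n) (nv : 'I_k -> 'rV[R]_n).
Variables (c : 'I_k -> R -> R) (t : R).
Local Notation C := (polyhedron M nv c t).
Local Notation J y := (active M nv c t y).

(* Inactive constraints have positive slack, so a short enough step along [d] keeps them. *)
Lemma polyhedron_feasible_dir {y d} : C y ->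
  (forall i, i \in J y -> ip M d (nv i) <= 0) ->
  exists2 e, 0 < e & C (y + e *: d).
Proof.
move=> Cy d_feas.
pose s i := c i t - ip M y (nv i).
have s_gt0 i : i \notin J y -> 0 < s i.
  by rewrite inE subr_gt0 lt_neqAle => ->; rewrite Cy.
pose S := \sum_(i | i \notin J y) `|ip M d (nv i)| / s i.
have S_ge0 : 0 <= S.
  by apply: sumr_ge0 => i /s_gt0/ltW si; rewrite divr_ge0.
have e_gt0 : 0 < (1 + S)^-1 by rewrite invr_gt0 ltr_wpDr.
exists (1 + S)^-1 => // i.
rewrite /= ipDl ipZl -lerBrDl -/(s i).
have [iJ|iNJ] := boolP (i \in J y).
  move: (iJ); rewrite inE /s => /eqP->.
  by rewrite subrr mulr_ge0_le0 ?d_feas ?ltW.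
have si_gt0 := s_gt0 i iNJ.
rewrite ler_pdivrMl ?ltr_wpDr // (le_trans (ler_norm _)) //.
rewrite -ler_pdivrMr // (@le_trans _ _ S) //; last by rewrite ler_wpDl.
rewrite /S (bigD1 i) //= lerDl; apply: sumr_ge0 => j /andP[/s_gt0/ltW sj _].
by rewrite divr_ge0.
Qed.

Lemma normal_cone_polyhedron_dir {y v d} : normal_cone M C y v ->
  (forall i, i \in J y -> ip M d (nv i) <= 0) -> ip M v d <= 0.
Proof.
move=> [Cy v_normal] d_feas; have [e e_gt0 Cyd] := polyhedron_feasible_dir Cy d_feas.
by have := v_normal _ Cyd; rewrite addrC addKr ipZr pmulr_rle0.
Qed.

Hypothesis M_ip : is_inner_product_matrix M.

Lemma normal_cone_polyhedron_span {y v} : normal_cone M C y v ->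
  lin_indep_on nv (J y) -> v = \sum_i (v *m multipliers_mx M nv (J y)) 0 i *: nv i.
Proof.
move=> v_normal nv_indep; set w := \sum_i _.
have w_ip j : j \in J y -> ip M w (nv j) = ip M v (nv j).
  exact: ip_sum_multipliers.
have u_orth j : j \in J y -> ip M (v - w) (nv j) = 0.
  by move=> jJ; rewrite ipBl w_ip // subrr.
have vu0 : ip M v (v - w) = 0.
  apply/le_anti/andP; split.
    by apply: normal_cone_polyhedron_dir v_normal _ => j /u_orth->.
  rewrite -oppr_le0 -ipNr; apply: normal_cone_polyhedron_dir v_normal _ => j jJ.
  by rewrite ipNl u_orth ?oppr0.
have wu0 : ip M w (v - w) = 0.
  rewrite {1}/w sum_multipliers // ip_suml big1 // => i iJ.
  by rewrite ipZl (ipC M_ip.1) u_orth ?mulr0.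
apply/eqP; rewrite -subr_eq0; apply/eqP/(ip_eq0 M_ip).
by rewrite {1}ipBl vu0 wu0 subrr.
Qed.

Lemma normal_cone_polyhedron_multipliers_ge0 {y v} : normal_cone M C y v ->
  lin_indep_on nv (J y) -> forall i, 0 <= (v *m multipliers_mx M nv (J y)) 0 i.
Proof.
move=> v_normal nv_indep j; set mu := v *m _.
have [jJ|jNJ] := boolP (j \in J y); last by rewrite multipliers_out.
pose e : 'rV[R]_k := - delta_mx 0 j *m invmx (gram_mx M nv (J y)).
pose d := \sum_(i in J y) e 0 i *: nv i.
have d_ip i : i \in J y -> ip M d (nv i) = - (i == j)%:R.
  by move=> iJ; rewrite gram_solve_in // !mxE eqxx.
have vd : ip M v d = - mu 0 j.
  rewrite {1}(normal_cone_polyhedron_span v_normal nv_indep) sum_multipliers //.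
  rewrite ip_suml (bigD1 j) //= big1 => [|i /andP[iJ ij]];
    rewrite ipZl (ipC M_ip.1) d_ip //.
    by rewrite eqxx addr0 mulrN1.
  by rewrite (negbTE ij) oppr0 mulr0.
rewrite -oppr_le0 -vd; apply: normal_cone_polyhedron_dir v_normal _ => i iJ.
by rewrite d_ip // oppr_le0 ler0n.
Qed.

End PolyhedronNormalCone.

Section MatrixEntries.
Context {R : realType}.

Lemma mx_entry_le_norm {p q} (A : 'M[R]_(p, q)) i j : `|A i j| <= `|A|.
Proof. by rewrite [leRHS]/Num.norm /= mx_normrE; apply/bigmax_geP; right; exists (i, j). Qed.

Lemma cvg_mx_entry {p q} {U : Type} {F : set_system U} {FF : Filter F}
    {f : U -> 'M[R]_(p, q)} {l : 'M[R]_(p, q)} i j :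
  f @ F --> l -> (fun u => f u i j) @ F --> l i j.
Proof.
move=> /cvgrPdist_lt f_l; apply/cvgrPdist_lt => e e_gt0.
apply: filterS (f_l e e_gt0) => u; apply: le_lt_trans.
by have := mx_entry_le_norm (l - f u) i j; rewrite !mxE.
Qed.

Lemma norm_mulmx_entry_le {p q} (u : 'rV[R]_p) (A : 'M[R]_(p, q)) j B :
  (forall a, `|u 0 a| <= B) -> `|(u *m A) 0 j| <= \sum_a B * `|A a j|.
Proof.
move=> u_le; rewrite mxE; apply: le_trans (ler_norm_sum _ _ _) _.
by apply: ler_sum => a _; rewrite normrM ler_wpM2r.
Qed.

End MatrixEntries.

Section Lipschitz.
Context {R : realType}.

Lemma lipschitz_continuous (V W : normedModType R) (f : V -> W) L :
  (forall s t, `|f s - f t| <= L * `|s - t|) -> continuous f.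
Proof.
move=> f_lip s; apply/cvgrPdist_lt => e e_gt0.
have L1_gt0 : 0 < `|L| + 1 by rewrite ltr_wpDl.
near=> t; apply: le_lt_trans (f_lip s t) _.
apply: (@le_lt_trans _ _ ((`|L| + 1) * `|s - t|)).
  by rewrite ler_wpM2r // (le_trans (ler_norm L)) // lerDl.
rewrite -ltr_pdivlMl //; near: t; apply: cvgr_dist_lt => //.
by rewrite mulr_gt0 ?invr_gt0.
Unshelve. all: by end_near.
Qed.

Lemma measurable_lipschitz_entry {p q} {f : R -> 'M[R]_(p, q)} {L} i j :
  (forall s t, `|f s - f t| <= L * `|s - t|) -> measurable_fun setT (fun t => f t i j).
Proof.
move=> f_lip; apply: continuous_measurable_fun.
apply: (@lipschitz_continuous _ _ _ L) => s t; apply: le_trans (f_lip s t).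
by have := mx_entry_le_norm (f s - f t) i j; rewrite !mxE.
Qed.

Lemma dist_maxr_le (a s t : R) : `|Num.max a s - Num.max a t| <= `|s - t|.
Proof.
have st := ler_norm (s - t); have := ler_norm (t - s); rewrite distrC => ts.
by rewrite ler_norml; case: (leP a s); case: (leP a t) => *; apply/andP; split; lra.
Qed.

Lemma dist_minr_le (b s t : R) : `|Num.min b s - Num.min b t| <= `|s - t|.
Proof.
have st := ler_norm (s - t); have := ler_norm (t - s); rewrite distrC => ts.
by rewrite ler_norml; case: (leP b s); case: (leP b t) => *; apply/andP; split; lra.
Qed.

End Lipschitz.

Section Clamp.
Context {R : realType}.
Variables a b : R.

Definition clamp (t : R) : R := Num.min b (Num.max a t).

Lemma clamp_dist s t : `|clamp s - clamp t| <= `|s - t|.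
Proof. exact: le_trans (dist_minr_le _ _ _) (dist_maxr_le _ _ _). Qed.

Lemma clamp_itv t : a <= b -> clamp t \in `[a, b].
Proof. by move=> ab; rewrite in_itv /= le_min ab le_max ge_min !lexx. Qed.

Lemma clamp_id t : t \in `[a, b] -> clamp t = t.
Proof.
by rewrite in_itv /= => /andP[a_le_t t_le_b]; rewrite /clamp (max_r a_le_t) (min_r t_le_b).
Qed.

Lemma lipschitz_clamp (V : normedModType R) (f : R -> V) L : 0 <= L ->
  (forall s t, s \in `[a, b] -> t \in `[a, b] -> `|f s - f t| <= L * `|s - t|) ->
  forall s t, `|f (clamp s) - f (clamp t)| <= L * `|s - t|.
Proof.
move=> L_ge0 f_lip s t; have [ab|ba] := leP a b.
  apply: le_trans (f_lip _ _ (clamp_itv s ab) (clamp_itv t ab)) _.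
  by rewrite ler_wpM2l // clamp_dist.
have clampE u : clamp u = b by rewrite /clamp min_l // (le_trans (ltW ba)) // le_max lexx.
by rewrite !clampE subrr normr0 mulr_ge0.
Qed.

End Clamp.

Section BackwardQuotient.
Context {R : realType} {V : normedModType R}.

Definition backward_quotient (f : R -> V) (m : nat) (t : R) : V :=
  m.+1%:R *: (f t - f (t - m.+1%:R^-1)).

Lemma cvg_backward_quotient {f : R -> V} {t} : derivable f t 1 ->
  backward_quotient f ^~ t @ \oo --> derive1 f t.
Proof.
move=> f_dvb; pose h (m : nat) : R := - m.+1%:R^-1.
have h_cvg0 : h @ \oo --> (0 : R) by rewrite -oppr0; apply: cvgN; exact: cvg_harmonic.
have h_cvg : h @ \oo --> (0 : R)^'.
  move=> A /= A0; have := h_cvg0 _ A0; apply: (@filterS _ \oo) => m /=; apply.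
  by rewrite /h oppr_eq0 invr_eq0 pnatr_eq0.
rewrite derive1E; have := cvg_comp _ _ h_cvg f_dvb; apply: cvg_trans.
apply: near_eq_cvg; apply: nearW => m /=.
by rewrite /h /backward_quotient [_%:A]mulr1 invrN invrK scaleNr -scalerN opprB [_ + t]addrC.
Qed.

Lemma near_eq_backward_quotient (f g : R -> V) t e : 0 < e ->
  (forall s, t - e <= s <= t -> f s = g s) ->
  \forall m \near \oo, backward_quotient f m t = backward_quotient g m t.
Proof.
move=> e_gt0 fg; apply: filterS (near_infty_natSinv_lt (PosNum e_gt0)) => m /= me.
have : 0 < m.+1%:R^-1 :> R by rewrite invr_gt0.
rewrite /backward_quotient; move: me; set h := m.+1%:R^-1 => me h_gt0.
by rewrite !fg //; apply/andP; split; lra.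
Qed.

Lemma norm_backward_quotient_le {f : R -> V} {L} m t :
  (forall s t, `|f s - f t| <= L * `|s - t|) -> `|backward_quotient f m t| <= L.
Proof.
move=> f_lip; rewrite normrZ ger0_norm // -ler_pdivlMl // mulrC.
by apply: le_trans (f_lip _ _) _; rewrite subKr ger0_norm.
Qed.

End BackwardQuotient.

Section LimsupQuotient.
Context {R : realType} {n : nat}.
Variables (L : R) (y : R -> 'rV[R]_n).
Hypotheses (L_ge0 : 0 <= L) (y_lip : forall s t, `|y s - y t| <= L * `|s - t|).

(* The clipping to [-L, L] makes it bounded but does not act where the backward
   quotients converge, since they are all bounded by [L]. *)
Definition limsup_quotient (t : R) : 'rV[R]_n :=
  \row_a Num.max (- L) (Num.min L (limn_sup (fun m => backward_quotient y m t 0 a))).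

Lemma norm_limsup_quotient_le t a : `|limsup_quotient t 0 a| <= L.
Proof.
by rewrite mxE ler_norml le_max ge_max ge_min !lexx /= andbT ge0_cp.
Qed.

Lemma limsup_quotientE t l : backward_quotient y ^~ t @ \oo --> l -> limsup_quotient t = l.
Proof.
move=> y_cvg; apply/rowP => a; rewrite mxE.
have la_cvg : (fun m => backward_quotient y m t 0 a) @ \oo --> l 0 a.
  exact: cvg_mx_entry y_cvg.
have la_le : `|l 0 a| <= L.
  rewrite -(cvg_lim _ (cvg_norm la_cvg)) //; apply: limr_le.
    by apply/cvg_ex; eexists; exact: cvg_norm la_cvg.
  apply: nearW => m; have := norm_backward_quotient_le m t y_lip.
  by apply: le_trans; exact: mx_entry_le_norm.
move: la_le; rewrite ler_norml => /andP[la_ge la_le].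
by rewrite cvg_limn_supE ?(cvg_lim _ la_cvg) ?(min_r la_le) ?(max_r la_ge).
Qed.

Lemma measurable_limsup_quotient a : measurable_fun setT (fun t => limsup_quotient t 0 a).
Proof.
have y_meas := measurable_lipschitz_entry 0 a y_lip.
have q_meas m : measurable_fun setT (fun t => backward_quotient y m t 0 a).
  rewrite (_ : (fun t => _) = fun t => m.+1%:R * (y t 0 a - y (t - m.+1%:R^-1) 0 a)).
    apply: measurable_funM; first exact: measurable_cst.
    apply: measurable_funB; first exact: y_meas.
    apply: (measurableT_comp y_meas).
    by apply: measurable_funD.
  by apply/funext => t; rewrite !mxE.
have q_bound m t : `|backward_quotient y m t 0 a| <= L.
  exact: le_trans (mx_entry_le_norm _ _ _) (norm_backward_quotient_le m t y_lip).
under eq_fun do rewrite mxE.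
apply: measurable_maxr; first exact: measurable_cst.
apply: measurable_minr; first exact: measurable_cst.
apply: measurable_fun_limn_sup => [t _|t _|m]; last exact: q_meas.
  by exists L => _ [m _ <-]; move: (q_bound m t); rewrite ler_norml => /andP[].
by exists (- L) => _ [m _ <-]; move: (q_bound m t); rewrite ler_norml => /andP[].
Qed.

End LimsupQuotient.

Section Measurability.
Context {R : realType}.

Lemma measurable_mulmx_entry {p q} (u : R -> 'rV[R]_p) (A : 'M[R]_(p, q)) j :
  (forall a, measurable_fun setT (fun t => u t 0 a)) ->
  measurable_fun setT (fun t => (u t *m A) 0 j).
Proof.
move=> u_meas; under eq_fun do rewrite mxE.
by apply: measurable_sum => a; apply: measurable_funM.
Qed.

Lemma ae_neq (a : R) : {ae lebesgue_measure, forall t, t != a}.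
Proof.
exists [set a]; split; [exact: measurable_set1 | exact: lebesgue_measure_set1 |].
by move=> t /= /negP; rewrite negbK => /eqP.
Qed.

Lemma integrable_itv_bounded (f : R -> R) a b B :
  measurable_fun setT f -> (forall t, `|f t| <= B) ->
  lebesgue_measure.-integrable `[a, b] (EFin \o f).
Proof.
move=> f_meas f_le; apply: measurable_bounded_integrable.
- exact: measurable_itv.
- rewrite [X in (X < _)%E](lebesgue_measure_itv `[a, b]) /=.
  by case: ifP => _; rewrite ?ltry // -EFinD ltry.
- exact: measurable_funTS.
- exists B; split; first exact: num_real.
  by move=> r B_lt_r t _; apply: le_trans (f_le t) (ltW B_lt_r).
Qed.

End Measurability.

Section MultiplierFunctions.
Context {R : realType} {n k : nat}.
Variables (M : 'M[R]_n) (nv : 'I_k -> 'rV[R]_n) (c : 'I_k -> R -> R).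
Variables (L : R) (y : R -> 'rV[R]_n).

Definition active_time_set (J : {set 'I_k}) : set R :=
  [set t | active M nv c t (y t) = J].

Definition multiplier_fun (i : 'I_k) (t : R) : R := Num.max 0
  (\sum_(J : {set 'I_k}) \1_(active_time_set J) t *
     (- limsup_quotient L y t *m multipliers_mx M nv J) 0 i).

Lemma multiplier_fun_ge0 i t : 0 <= multiplier_fun i t.
Proof. by rewrite le_max lexx. Qed.

Hypotheses (L_ge0 : 0 <= L) (y_lip : forall s t, `|y s - y t| <= L * `|s - t|).

Lemma multiplier_funE i {t l} : backward_quotient y ^~ t @ \oo --> l ->
  multiplier_fun i t =
  Num.max 0 ((- l *m multipliers_mx M nv (active M nv c t (y t))) 0 i).
Proof.
move=> y_cvg; rewrite /multiplier_fun (bigD1 (active M nv c t (y t))) //=.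
rewrite (limsup_quotientE _ _ y_lip _ _ y_cvg) indicE mem_set // mul1r big1 ?addr0 //.
by move=> J J_neq; rewrite indicE memNset ?mul0r // => /= tJ; rewrite tJ eqxx in J_neq.
Qed.

Hypothesis c_lip : forall i, globally_lipschitz (c i).

Lemma measurable_active_time_set J : measurable (active_time_set J).
Proof.
pose Z i := (fun t => ip M (y t) (nv i) - c i t) @^-1` [set 0].
have Z_meas i : measurable (Z i).
  have ip_meas : measurable_fun setT (fun t => ip M (y t) (nv i)).
    rewrite /ip; under eq_fun do rewrite -mulmxA.
    by apply: measurable_mulmx_entry => a; exact: measurable_lipschitz_entry y_lip.
  have [Lc c_lipL] := c_lip i.
  have c_meas : measurable_fun setT (c i).
    by apply: continuous_measurable_fun; exact: lipschitz_continuous c_lipL.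
  rewrite -[Z i]setTI.
  exact: (measurable_funB ip_meas c_meas measurableT (measurable_set1 0)).
have -> : active_time_set J = \bigcap_(i in setT) (if i \in J then Z i else ~` Z i).
  apply/seteqP; split => t /=.
    move=> <- i _; rewrite inE; case: eqP => [e|ne] /=; first by rewrite /Z /= e subrr.
    by move/subr0_eq.
  move=> tJ; apply/setP => i; rewrite inE; have := tJ i I.
  case: (i \in J) => [/subr0_eq/eqP //|Zn]; apply/eqP => e.
  by apply: Zn; rewrite /Z /= e subrr.
apply: fin_bigcap_measurable; first exact: finite_finset.
by move=> i _; case: ifP => _; [|apply: measurableC].
Qed.

Lemma measurable_multiplier_fun i : measurable_fun setT (multiplier_fun i).
Proof.
apply: measurable_maxr; first exact: measurable_cst.
apply: measurable_sum => J; apply: measurable_funM.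
  by apply: measurable_indic; exact: measurable_active_time_set.
apply: measurable_mulmx_entry => a; under eq_fun do rewrite mxE.
by apply: measurable_funN; exact: measurable_limsup_quotient.
Qed.

Lemma multiplier_fun_bounded i : exists B, forall t, `|multiplier_fun i t| <= B.
Proof.
exists (\sum_(J : {set 'I_k}) \sum_a L * `|multipliers_mx M nv J a i|) => t.
rewrite /multiplier_fun; set X := \sum_J _.
have X_le : `|Num.max 0 X| <= `|X| by case: (leP 0 X); rewrite ?normr0.
apply: le_trans X_le _; apply: le_trans (ler_norm_sum _ _ _) _.
apply: ler_sum => J _; rewrite normrM indicE.
apply: (@le_trans _ _ (1 * `|(- limsup_quotient L y t *m multipliers_mx M nv J) 0 i|)).
  by apply: ler_wpM2r => //; case: (_ \in _); rewrite ?normr1 ?normr0.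
rewrite mul1r; apply: norm_mulmx_entry_le => a.
by rewrite mxE normrN; exact: norm_limsup_quotient_le.
Qed.

End MultiplierFunctions.

Theorem lemma6 (R : realType) (n k : nat) (M : 'M[R]_n)
  (nv : 'I_k -> 'rV[R]_n) (c : 'I_k -> R -> R) (T : R) (x : R -> 'rV[R]_n) :
  is_inner_product_matrix M ->
  (forall i, globally_lipschitz (c i)) ->
  (forall t, t \in `[0, T] -> polyhedron M nv c t !=set0) ->
  (forall t y, t \in `[0, T] -> polyhedron M nv c t y ->
      lin_indep_on nv (active M nv c t y)) ->
  is_solution M (polyhedron M nv c) T x ->
  exists lam : 'I_k -> R -> R,
    (forall i t, t \in `[0, T] -> 0 <= lam i t) /\
    (forall i, (@lebesgue_measure R).-integrable `[0, T] (fun t => (lam i t)%:E)) /\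
    {ae (@lebesgue_measure R), forall t, t \in `[0, T] ->
       - derive1 x t = \sum_(i < k) lam i t *: nv i}.
Proof.
move=> M_ip c_lip _ nv_indep [[L0 x_lip] [_ x_ae]].
pose L := Num.max L0 0; have L_ge0 : 0 <= L by rewrite le_max lexx orbT.
pose xe := x \o clamp 0 T.
have xe_lip s t : `|xe s - xe t| <= L * `|s - t|.
  apply: lipschitz_clamp L_ge0 _ s t => s t s_in t_in.
  by apply: le_trans (x_lip s t s_in t_in) _; rewrite ler_wpM2r // le_max lexx.
exists (multiplier_fun M nv c L xe); split; [|split].
- by move=> i t _; exact: multiplier_fun_ge0.
- move=> i; have [B lam_le] := multiplier_fun_bounded M nv c L xe L_ge0 i.
  have lam_meas := measurable_multiplier_fun M nv c L xe xe_lip c_lip i.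
  exact: integrable_itv_bounded lam_meas lam_le.
apply: (filterS2 (ae_filter_ringOfSetsType lebesgue_measure) _ (ae_neq 0) x_ae).
move=> t t_neq0 x_t t_in.
have [x_dvb x_normal] := x_t t_in.
have [t_ge0 t_le_T] : 0 <= t /\ t <= T by move: t_in; rewrite in_itv => /andP.
have xeE s : 0 <= s <= t -> xe s = x s.
  move=> /andP[s_ge0 s_le_t].
  by rewrite /xe /= clamp_id // in_itv /= s_ge0 (le_trans s_le_t).
have q_cvg : backward_quotient xe ^~ t @ \oo --> derive1 x t.
  have := cvg_backward_quotient x_dvb; apply: cvg_trans; apply: near_eq_cvg.
  apply: near_eq_backward_quotient (_ : 0 < t) _ => [|s]; last by rewrite subrr => /xeE.
  by rewrite lt_neqAle eq_sym t_neq0.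
have x_indep := nv_indep t _ t_in x_normal.1.
apply: eq_trans (normal_cone_polyhedron_span M nv c t M_ip x_normal x_indep) _.
apply: eq_bigr => i _.
rewrite (multiplier_funE M nv c L xe xe_lip i q_cvg) xeE ?lexx ?t_ge0 // max_r //.
exact: normal_cone_polyhedron_multipliers_ge0.
Qed.
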